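(* Let $\Sigma$ be a finite alphabet with at least two symbols. Define $\delta:\Sigma^{\mathbb{N}}\times\Sigma^{\mathbb{N}}\to\mathbb{R}$ by $\delta(x,x)=0$ and, for $x\neq y$, $\delta(x,y)=2^{-n}$ where $n$ is the minimal number of states of a Büchi automaton that separates $x$ and $y$. Then: (1) $\delta$ is a distance on $\Sigma^{\mathbb{N}}$; (2) $\delta$ is compatible with the Büchi topology $\tau_B$; (3) $\delta$ is not complete.
   Context: A Büchi automaton is $\mathcal{A}=(\Sigma,Q,Q_i,Q_f,\delta)$ with finite state set $Q$, initial states $Q_i$, final states $Q_f$, transitions $\subseteq Q\times\Sigma\times Q$; a run on $\sigma\in\Sigma^{\mathbb{N}}$ is $(q_n)_n$ with $q_0\in Q_i$ and each $(q_n,\sigma(n),q_{n+1})$ a transition; it is accepting if it visits $Q_f$ infinitely often; $L(\mathcal{A})$ is the set of words with an accepting run; $|\mathcal{A}|=|Q|$. A language is $\omega$-regular if it equals some $L(\mathcal{A})$. $\mathcal{A}$ separates $x$ and $y$ if exactly one of $x,y$ lies in $L(\mathcal{A})$. $\tau_B$ is the topology on $\Sigma^{\mathbb{N}}$ generated by the $\omega$-regular languages. *)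

From Stdlib Require Import Reals Lra List Classical ClassicalEpsilon.
Open Scope R_scope.
Set Implicit Arguments.

Definition word (Sg : Type) := nat -> Sg.

(** A Büchi automaton with state set Q = {0, ..., nst-1}; |A| = nst.
    Initial states, final states and transitions are given as predicates;
    only their restriction to Q matters (runs stay inside Q). *)
Record buchi (Sg : Type) := Buchi {
  nst : nat;
  binit : nat -> Prop;
  bfinal : nat -> Prop;
  btrans : nat -> Sg -> nat -> Prop
}.

Definition is_run (Sg : Type) (A : buchi Sg) (w : word Sg) (r : nat -> nat) : Prop :=
  binit A (r 0%nat) /\
  forall k : nat, (r k < nst A)%nat /\ btrans A (r k) (w k) (r (Datatypes.S k)).

Definition is_accepting (Sg : Type) (A : buchi Sg) (r : nat -> nat) : Prop :=
  forall N : nat, exists k : nat, (N <= k)%nat /\ bfinal A (r k).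

Definition accepts (Sg : Type) (A : buchi Sg) (w : word Sg) : Prop :=
  exists r, is_run A w r /\ is_accepting A r.

Definition omega_regular (Sg : Type) (L : word Sg -> Prop) : Prop :=
  exists A : buchi Sg, forall w, L w <-> accepts A w.

Definition separates (Sg : Type) (A : buchi Sg) (x y : word Sg) : Prop :=
  ~ (accepts A x <-> accepts A y).

Definition is_min_sep (Sg : Type) (x y : word Sg) (n : nat) : Prop :=
  (exists A : buchi Sg, nst A = n /\ separates A x y) /\
  (forall A : buchi Sg, separates A x y -> (n <= nst A)%nat).

Definition delta (Sg : Type) (x y : word Sg) : R :=
  if excluded_middle_informative (x = y) then 0
  else / 2 ^ (epsilon (inhabits 0%nat) (is_min_sep x y)).

Definition is_distance (X : Type) (d : X -> X -> R) : Prop :=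
  (forall x y, 0 <= d x y) /\
  (forall x y, d x y = 0 <-> x = y) /\
  (forall x y, d x y = d y x) /\
  (forall x y z, d x z <= d x y + d y z).

Definition metric_open (X : Type) (d : X -> X -> R) (U : X -> Prop) : Prop :=
  forall x, U x -> exists eps, 0 < eps /\ forall y, d x y < eps -> U y.

(** Open sets of tau_B, the topology generated by the omega-regular languages
    (arbitrary unions of finite intersections of omega-regular languages). *)
Definition buchi_open (Sg : Type) (U : word Sg -> Prop) : Prop :=
  forall x, U x ->
    exists Ls : list (word Sg -> Prop),
      (forall L, In L Ls -> omega_regular L /\ L x) /\
      (forall y, (forall L, In L Ls -> L y) -> U y).

Definition cauchy (X : Type) (d : X -> X -> R) (u : nat -> X) : Prop :=
  forall eps, 0 < eps -> exists N : nat, forall m n : nat,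
    (N <= m)%nat -> (N <= n)%nat -> d (u m) (u n) < eps.

Definition converges (X : Type) (d : X -> X -> R) (u : nat -> X) : Prop :=
  exists l : X, forall eps, 0 < eps -> exists N : nat, forall n : nat,
    (N <= n)%nat -> d (u n) l < eps.

Definition complete (X : Type) (d : X -> X -> R) : Prop :=
  forall u : nat -> X, cauchy d u -> converges d u.

(* The open ball of radius 2^-N around x consists of the words that no Büchi automaton with
   at most N states separates from x.  Recording, for a finite word and for every transition
   structure on N states, which pairs of states the word connects (and whether through a final
   state) gives a multiplicative "profile" with finitely many values, and two infinite words cut
   into blocks with equal profiles are accepted by the same automata with at most N states.
   By Ramsey's theorem every word x factors as u v1 v2 ... with all vi of one profile; an
   automaton guessing such factorizations recognizes an omega-regular neighbourhood of x inside
   the ball.  Conversely, finitely many omega-regular languages are recognized by automata with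
   at most K states, so their intersection contains the ball of radius 2^-K around each of its
   points.  An automaton separating x and z separates x from y or y from z, so [delta] is even
   an ultrametric.  Finally a^(n!) b a^omega is a Cauchy sequence, because the profiles of a^t
   are eventually periodic, while a limit would have to be a^omega, which the two-state
   automaton "b occurs" separates from every term. *)

From Stdlib Require Import Reals List Lra Lia Arith Factorial Wf_nat FinFun.
From Stdlib Require Import Classical ClassicalEpsilon FunctionalExtensionality PropExtensionality.
Import ListNotations Fin2Restrict.
Open Scope nat_scope.

Lemma Finite_prod (A B : Type) : Finite A -> Finite B -> Finite (A * B).
Proof.
  intros [lA HA] [lB HB]. exists (list_prod lA lB). intros [x y]. apply in_prod; auto.
Qed.

Lemma Finite_option (A : Type) : Finite A -> Finite (option A).
Proof.
  intros [l H]. exists (None :: map Some l).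
  intros [x|]; [right; apply in_map, H | left; reflexivity].
Qed.

Lemma Finite_bool : Finite bool.
Proof. exists [true; false]. intros []; simpl; auto. Qed.

Lemma Finite_Prop : Finite Prop.
Proof.
  exists [True; False]. intros P. destruct (classic P) as [HP|HP].
  - left. apply propositional_extensionality. tauto.
  - right. left. apply propositional_extensionality. tauto.
Qed.

Lemma Finite_arrow (A B : Type) : Finite A -> Finite B -> Finite (A -> B).
Proof.
  intros [lA HA] [lB HB].
  assert (Hrestr : forall l : list A, exists L : list (A -> B), forall f, exists g,
      In g L /\ forall a, In a l -> g a = f a).
  { induction l as [|a0 l [L HL]].
    - destruct (classic (inhabited (A -> B))) as [[f0]|Hempty].
      + exists [f0]. intros f. exists f0. split; [left; reflexivity | intros a []].
      + exists []. intros f. exfalso. apply Hempty. constructor. exact f.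
    - set (upd := fun (g : A -> B) (b : B) (x : A) =>
                    if excluded_middle_informative (x = a0) then b else g x).
      exists (flat_map (fun g => map (upd g) lB) L).
      intros f. destruct (HL f) as [g [Hg Hgf]].
      exists (upd g (f a0)). split.
      + apply in_flat_map. exists g. split; [exact Hg|]. apply in_map, HB.
      + intros a Ha. unfold upd. destruct (excluded_middle_informative (a = a0)) as [->|Hne].
        * reflexivity.
        * destruct Ha as [Ha|Ha]; [congruence | apply Hgf, Ha]. }
  destruct (Hrestr lA) as [L HL]. exists L. intros f.
  destruct (HL f) as [g [Hg Hgf]].
  replace f with g; [exact Hg|]. apply functional_extensionality. intros a. apply Hgf, HA.
Qed.

Lemma Finite_injection_nat (X : Type) : Finite X ->
  exists (K : nat) (enc : X -> nat), (forall x, enc x < K) /\ Injective enc.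
Proof.
  intros [l Hl].
  assert (Henc : exists enc : X -> nat, (forall x, In x l -> enc x < length l) /\
            (forall x y, In x l -> In y l -> enc x = enc y -> x = y)).
  { clear Hl. induction l as [|a l [enc [Hlt Hinj]]].
    - exists (fun _ => 0). split; intros; contradiction.
    - exists (fun x => if excluded_middle_informative (x = a) then 0 else S (enc x)). split.
      + intros x Hx. simpl. destruct (excluded_middle_informative (x = a)); [lia|].
        destruct Hx as [Hx|Hx]; [congruence|]. specialize (Hlt x Hx). lia.
      + intros x y Hx Hy.
        destruct (excluded_middle_informative (x = a)), (excluded_middle_informative (y = a));
          try congruence.
        intros E. injection E. apply Hinj.
        * destruct Hx; [congruence | assumption].
        * destruct Hy; [congruence | assumption]. }
  destruct Henc as [enc [Hlt Hinj]]. exists (length l), enc.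
  split; [intros x; apply Hlt, Hl | intros x y; apply Hinj; apply Hl].
Qed.

Definition infinite (P : nat -> Prop) : Prop := forall n, exists m, n <= m /\ P m.

Lemma infinite_all : infinite (fun _ => True).
Proof. intros n. exists n. split; [lia | exact I]. Qed.

Lemma least_element (P : nat -> Prop) (n : nat) : P n ->
  exists k, P k /\ forall m, P m -> k <= m.
Proof.
  intros Hn. destruct (dec_inh_nat_subset_has_unique_least_element P (fun m => classic (P m)))
    as [k [[Hk Hleast] _]]; eauto.
Qed.

Lemma infinite_enumeration (P : nat -> Prop) : infinite P ->
  exists f : nat -> nat, (forall t, f t < f (S t)) /\ forall m, P m <-> exists t, f t = m.
Proof.
  intros HP.
  set (next := fun n => epsilon (inhabits 0) (fun k => (n < k /\ P k) /\
                          forall m, n < m /\ P m -> k <= m)).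
  assert (Hnext : forall n, (n < next n /\ P (next n)) /\ forall m, n < m /\ P m -> next n <= m).
  { intros n. apply epsilon_spec. destruct (HP (S n)) as [m [Hm Pm]].
    apply (least_element (fun k => n < k /\ P k) m). split; [lia | exact Pm]. }
  destruct (HP 0) as [m0 [_ Pm0]]. destruct (least_element P m0 Pm0) as [k0 [Pk0 Hk0]].
  set (f := fix f t := match t with 0 => k0 | S t => next (f t) end).
  assert (Hf : forall t, f t < f (S t)) by (intros t; apply Hnext).
  exists f. split; [exact Hf|]. intros m. split.
  - intros Pm.
    assert (Hcover : forall n, k0 <= n -> exists t, f t <= n < f (S t)).
    { induction n as [|n IH]; intros Hn.
      - exists 0. specialize (Hf 0). change (f 0) with k0 in *. lia.
      - destruct (Nat.eq_dec k0 (S n)) as [<-|Hne].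
        + exists 0. specialize (Hf 0). change (f 0) with k0 in *. lia.
        + destruct (IH ltac:(lia)) as [t Ht].
          destruct (Nat.eq_dec (S n) (f (S t))) as [E|E].
          * exists (S t). specialize (Hf (S t)). lia.
          * exists t. lia. }
    destruct (Hcover m (Hk0 m Pm)) as [t Ht]. exists t.
    destruct (Nat.eq_dec (f t) m) as [E|E]; [exact E|].
    pose proof (proj2 (Hnext (f t)) m ltac:(split; [lia | exact Pm])).
    change (f (S t)) with (next (f t)) in Ht. lia.
  - intros [[|t] <-]; [exact Pk0 | apply Hnext].
Qed.

Lemma infinite_pigeonhole (K : Type) (P : nat -> Prop) (g : nat -> K) : Finite K -> infinite P ->
  exists k, infinite (fun m => P m /\ g m = k).
Proof.
  intros [l Hl] HP. apply NNPP. intros Hno.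
  assert (Hbound : forall l' : list K, exists B, forall m, B <= m -> P m -> ~ In (g m) l').
  { induction l' as [|k l' [B HB]].
    - exists 0. intros m _ _ [].
    - assert (Hk : ~ infinite (fun m => P m /\ g m = k)) by (intro; apply Hno; eauto).
      apply not_all_ex_not in Hk. destruct Hk as [B' HB'].
      exists (Nat.max B B'). intros m Hm Pm [Hin|Hin].
      + apply HB'. exists m. split; [lia | auto].
      + apply (HB m); [lia | auto | auto]. }
  destruct (Hbound l) as [B HB]. destruct (HP B) as [m [Hm Pm]]. apply (HB m Hm Pm), Hl.
Qed.

(** * Ramsey's theorem for consecutive pairs *)

Section Ramsey.
Variables (K : Type) (col : nat -> nat -> K).
Hypothesis HK : Finite K.

Lemma ramsey_step (X : nat -> Prop) : infinite X ->
  exists a k (X' : nat -> Prop), X a /\ infinite X' /\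
    forall j, X' j -> X j /\ a < j /\ col a j = k.
Proof.
  intros HX. destruct (HX 0) as [a [_ Ha]].
  assert (Hafter : infinite (fun j => X j /\ a < j)).
  { intros n. destruct (HX (S (Nat.max n a))) as [m [Hm Xm]].
    exists m. split; [lia | split; [auto | lia]]. }
  destruct (infinite_pigeonhole K _ (col a) HK Hafter) as [k Hk].
  exists a, k, (fun j => (X j /\ a < j) /\ col a j = k). split; [exact Ha|]. split; [exact Hk|].
  intros j [[H1 H2] H3]. auto.
Qed.

Lemma ramsey_prehomogeneous : exists (a : nat -> nat) (kk : nat -> K),
  forall n m, n < m -> a n < a m /\ col (a n) (a m) = kk n.
Proof.
  set (IS := {X : nat -> Prop | infinite X}).
  destruct (choice (fun (X : IS) (tr : nat * K * IS) =>
     proj1_sig X (fst (fst tr)) /\ forall j, proj1_sig (snd tr) j ->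
        proj1_sig X j /\ fst (fst tr) < j /\ col (fst (fst tr)) j = snd (fst tr)))
    as [step Hstep].
  { intros [X HX]. destruct (ramsey_step X HX) as (a & k & X' & Ha & HX' & Hsub).
    exists (a, k, exist _ X' HX'). simpl. auto. }
  (* [stage (S n)] is an infinite subset of [stage n] lying above the point [a n] chosen by
     [step (stage n)], and [col (a n)] is constant on it. *)
  set (stage := fix stage n := match n with
                               | 0 => exist infinite (fun _ => True) infinite_all
                               | S n => snd (step (stage n)) end).
  assert (Hdesc : forall n m, n < m ->
            forall j, proj1_sig (stage m) j -> proj1_sig (stage (S n)) j).
  { intros n m Hnm. induction Hnm as [|m Hm IH]; intros j Hj; [exact Hj|].
    apply IH, (Hstep (stage m)), Hj. }
  exists (fun n => fst (fst (step (stage n)))), (fun n => snd (fst (step (stage n)))).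
  intros n m Hnm.
  pose proof (proj2 (Hstep (stage n)) _ (Hdesc n m Hnm _ (proj1 (Hstep (stage m))))). tauto.
Qed.

Lemma ramsey_consecutive : exists h : nat -> nat,
  (forall t, h t < h (S t)) /\ exists k, forall t, col (h t) (h (S t)) = k.
Proof.
  destruct ramsey_prehomogeneous as (a & kk & Ha).
  destruct (infinite_pigeonhole K _ kk HK infinite_all) as [k Hk].
  destruct (infinite_enumeration _ Hk) as [e [He Hrange]].
  exists (fun t => a (e t)). split; [intros t; apply Ha, He|].
  exists k. intros t. rewrite (proj2 (Ha _ _ (He t))). apply (Hrange (e t)). eauto.
Qed.

End Ramsey.

(** * Profiles of finite words *)

Section Profiles.
Variables (Sg : Type) (N : nat).

(* Transitions and final states of an automaton on the states [Fin.t N]. *)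
Definition template : Type := ((Sg -> Fin.t N -> Fin.t N -> Prop) * (Fin.t N -> Prop))%type.

Fixpoint reads (T : template) (w : list Sg) (p q : Fin.t N) : Prop :=
  match w with
  | [] => p = q
  | s :: w' => exists m, fst T s p m /\ reads T w' m q
  end.

Fixpoint reads_final (T : template) (w : list Sg) (p q : Fin.t N) : Prop :=
  match w with
  | [] => p = q /\ snd T p
  | s :: w' => exists m, fst T s p m /\ ((snd T p /\ reads T w' m q) \/ reads_final T w' m q)
  end.

(* [profile_of w T p q b]: [w] labels a path of [T] from [p] to [q], through a final state
   if [b] is true.  Quantifying over all templates makes the profile independent of any
   particular automaton. *)
Definition profile : Type := template -> Fin.t N -> Fin.t N -> bool -> Prop.

Definition profile_of (w : list Sg) : profile :=
  fun T p q b => if b then reads_final T w p q else reads T w p q.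

Definition profile_mul (f g : profile) : profile := fun T p q b =>
  if b then exists m, (f T p m true /\ g T m q false) \/ (f T p m false /\ g T m q true)
  else exists m, f T p m false /\ g T m q false.

Lemma reads_app T w1 w2 p q :
  reads T (w1 ++ w2) p q <-> exists m, reads T w1 p m /\ reads T w2 m q.
Proof.
  revert p. induction w1 as [|s w1 IH]; intros p; simpl.
  - split; [intros H; exists p; auto | intros [m [-> H]]; exact H].
  - split.
    + intros [m [Hm H]]. apply IH in H. destruct H as [m' [H1 H2]].
      exists m'. split; [exists m; auto | auto].
    + intros [m' [[m [Hm H1]] H2]]. exists m. split; [auto|]. apply IH. eauto.
Qed.

Lemma reads_final_of_reads T w p q : snd T p -> reads T w p q -> reads_final T w p q.
Proof.
  destruct w as [|s w]; simpl.
  - auto.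
  - intros H1 [m [Hm H2]]. exists m. auto.
Qed.

Lemma reads_final_app T w1 w2 p q : reads_final T (w1 ++ w2) p q <->
  exists m, (reads_final T w1 p m /\ reads T w2 m q) \/ (reads T w1 p m /\ reads_final T w2 m q).
Proof.
  revert p. induction w1 as [|s w1 IH]; intros p; simpl.
  - split.
    + intros H. exists p. right. auto.
    + intros [m [[[-> H1] H2] | [-> H2]]]; [apply reads_final_of_reads; auto | exact H2].
  - split.
    + intros [m [Hm [[Hf H] | H]]].
      * apply reads_app in H. destruct H as [m' [H1 H2]].
        exists m'. left. split; [exists m; auto | exact H2].
      * apply IH in H. destruct H as [m' [[H1 H2] | [H1 H2]]].
        -- exists m'. left. split; [exists m; auto | exact H2].
        -- exists m'. right. split; [exists m; auto | exact H2].
    + intros [m' [[[m [Hm [[Hf H1] | H1]]] H2] | [[m [Hm H1]] H2]]].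
      * exists m. split; [exact Hm|]. left. split; [exact Hf|]. apply reads_app. eauto.
      * exists m. split; [exact Hm|]. right. apply IH. exists m'. left. auto.
      * exists m. split; [exact Hm|]. right. apply IH. exists m'. right. auto.
Qed.

Lemma profile_of_app w1 w2 : profile_of (w1 ++ w2) = profile_mul (profile_of w1) (profile_of w2).
Proof.
  do 4 (apply functional_extensionality; intro).
  apply propositional_extensionality. destruct (_ : bool).
  - apply reads_final_app.
  - apply reads_app.
Qed.

Lemma reads_profile_eq w1 w2 T p q :
  profile_of w1 = profile_of w2 -> reads T w1 p q -> reads T w2 p q.
Proof.
  intros E. change (profile_of w1 T p q false -> profile_of w2 T p q false). now rewrite E.
Qed.

Lemma reads_final_profile_eq w1 w2 T p q :
  profile_of w1 = profile_of w2 -> reads_final T w1 p q -> reads_final T w2 p q.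
Proof.
  intros E. change (profile_of w1 T p q true -> profile_of w2 T p q true). now rewrite E.
Qed.

Lemma Finite_profile : Finite Sg -> Finite profile.
Proof.
  intros HS. pose proof (Fin_Finite N).
  repeat (apply Finite_arrow || apply Finite_prod); auto using Finite_Prop, Finite_bool.
Qed.

Fixpoint factor (y : word Sg) (i n : nat) : list Sg :=
  match n with 0 => [] | S n' => y i :: factor y (S i) n' end.

Lemma factor_snoc y i n : factor y i (S n) = factor y i n ++ [y (i + n)].
Proof.
  revert i. induction n as [|n IH]; intros i; simpl.
  - rewrite Nat.add_0_r. reflexivity.
  - f_equal. replace (i + S n) with (S i + n) by lia. apply IH.
Qed.

Definition is_path (T : template) (y : word Sg) (rho : nat -> Fin.t N) (i j : nat) : Prop :=
  forall k, i <= k < j -> fst T (y k) (rho k) (rho (S k)).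

Definition cons_at (i : nat) (p : Fin.t N) (rho : nat -> Fin.t N) : nat -> Fin.t N :=
  fun k => if Nat.eq_dec k i then p else rho k.

Lemma cons_at_eq i p rho : cons_at i p rho i = p.
Proof. unfold cons_at. destruct (Nat.eq_dec i i); congruence. Qed.

Lemma cons_at_neq i p rho k : k <> i -> cons_at i p rho k = rho k.
Proof. unfold cons_at. destruct (Nat.eq_dec k i); congruence. Qed.

Lemma is_path_cons_at T y rho i j p : fst T (y i) p (rho (S i)) -> is_path T y rho (S i) j ->
  is_path T y (cons_at i p rho) i j.
Proof.
  intros Hi Hpath k Hk. rewrite (cons_at_neq i p rho (S k)) by lia.
  destruct (Nat.eq_dec k i) as [->|Hne].
  - rewrite cons_at_eq. exact Hi.
  - rewrite cons_at_neq by exact Hne. apply Hpath. lia.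
Qed.

Lemma reads_factor_path T y i n p q : reads T (factor y i n) p q ->
  exists rho, rho i = p /\ rho (i + n) = q /\ is_path T y rho i (i + n).
Proof.
  revert i p. induction n as [|n IH]; intros i p H; simpl in H.
  - exists (fun _ => p). rewrite Nat.add_0_r. split; [auto | split; [auto | intros k Hk; lia]].
  - destruct H as [m [Hm H]]. destruct (IH (S i) m H) as [rho [H1 [H2 H3]]].
    replace (S i + n) with (i + S n) in * by lia.
    exists (cons_at i p rho). rewrite cons_at_eq, cons_at_neq by lia.
    split; [auto | split; [auto|]]. apply is_path_cons_at; [rewrite H1 | ]; assumption.
Qed.

Lemma reads_final_factor_path T y i n p q : reads_final T (factor y i n) p q ->
  exists rho, rho i = p /\ rho (i + n) = q /\ is_path T y rho i (i + n) /\
    exists k, i <= k <= i + n /\ snd T (rho k).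
Proof.
  revert i p. induction n as [|n IH]; intros i p H; simpl in H.
  - destruct H as [-> Hf]. exists (fun _ => q). rewrite Nat.add_0_r.
    split; [auto | split; [auto | split; [intros k Hk; lia | exists i; split; [lia | auto]]]].
  - destruct H as [m [Hm [[Hf H] | H]]].
    + destruct (reads_factor_path T y (S i) n m q H) as [rho [H1 [H2 H3]]].
      replace (S i + n) with (i + S n) in * by lia.
      exists (cons_at i p rho). rewrite cons_at_eq, cons_at_neq by lia.
      split; [auto | split; [auto | split]].
      * apply is_path_cons_at; [rewrite H1 | ]; assumption.
      * exists i. rewrite cons_at_eq. split; [lia | exact Hf].
    + destruct (IH (S i) m H) as [rho [H1 [H2 [H3 [k [Hk Hfk]]]]]].
      replace (S i + n) with (i + S n) in * by lia.
      exists (cons_at i p rho). rewrite cons_at_eq, cons_at_neq by lia.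
      split; [auto | split; [auto | split]].
      * apply is_path_cons_at; [rewrite H1 | ]; assumption.
      * exists k. rewrite cons_at_neq by lia. split; [lia | exact Hfk].
Qed.

Lemma path_reads_factor T y rho i n : is_path T y rho i (i + n) ->
  reads T (factor y i n) (rho i) (rho (i + n)).
Proof.
  revert i. induction n as [|n IH]; intros i H; simpl.
  - f_equal. lia.
  - exists (rho (S i)). split; [apply H; lia|].
    replace (i + S n) with (S i + n) by lia. apply IH. intros k Hk. apply H. lia.
Qed.

Lemma path_reads_final_factor T y rho i n : is_path T y rho i (i + n) ->
  (exists k, i <= k <= i + n /\ snd T (rho k)) ->
  reads_final T (factor y i n) (rho i) (rho (i + n)).
Proof.
  revert i. induction n as [|n IH]; intros i H [k [Hk Hfk]]; simpl.
  - rewrite Nat.add_0_r. split; [auto|]. replace i with k by lia. exact Hfk.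
  - exists (rho (S i)). split; [apply H; lia|].
    replace (i + S n) with (S i + n) by lia.
    destruct (Nat.eq_dec k i) as [->|Hne].
    + left. split; [exact Hfk|]. apply path_reads_factor. intros k' Hk'. apply H. lia.
    + right. apply IH; [intros k' Hk'; apply H; lia | exists k; split; [lia | exact Hfk]].
Qed.

End Profiles.

Arguments reads {Sg N}. Arguments reads_final {Sg N}. Arguments profile_of {Sg N}.
Arguments profile_mul {Sg N}. Arguments factor {Sg}. Arguments is_path {Sg N}.

(** * Acceptance along a factorization *)

Section Cuts.
Variable c : nat -> nat.

Definition is_cut_seq : Prop := c 0 = 0 /\ forall i, c i < c (S i).

Fixpoint block_index (k : nat) : nat :=
  match k with
  | 0 => 0
  | S k' => if S k' <? c (S (block_index k')) then block_index k' else S (block_index k')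
  end.

Hypothesis Hc : is_cut_seq.

Lemma cut_lt i j : i < j -> c i < c j.
Proof.
  intros Hij. induction Hij as [|j Hj IH]; [apply Hc|]. pose proof (proj2 Hc j). lia.
Qed.

Lemma cut_ge i : i <= c i.
Proof. induction i as [|i IH]; [lia|]. pose proof (proj2 Hc i). lia. Qed.

Lemma block_index_spec k : c (block_index k) <= k < c (S (block_index k)).
Proof.
  destruct Hc as [H0 Hlt]. induction k as [|k IH]; simpl.
  - rewrite H0. specialize (Hlt 0). lia.
  - destruct (Nat.ltb_spec (S k) (c (S (block_index k)))); [lia|].
    specialize (Hlt (S (block_index k))). lia.
Qed.

Lemma block_index_unique i k : c i <= k < c (S i) -> block_index k = i.
Proof.
  intros Hk. pose proof (block_index_spec k) as Hb.
  destruct (Nat.lt_trichotomy (block_index k) i) as [Hl | [He | Hl]]; [| exact He |].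
  - destruct (Nat.eq_dec (S (block_index k)) i) as [<-|Hne]; [lia|].
    pose proof (cut_lt (S (block_index k)) i ltac:(lia)). lia.
  - destruct (Nat.eq_dec (S i) (block_index k)) as [E|Hne]; [rewrite <- E in Hb; lia|].
    pose proof (cut_lt (S i) (block_index k) ltac:(lia)). lia.
Qed.

Lemma block_index_cut i : block_index (c i) = i.
Proof. apply block_index_unique. pose proof (proj2 Hc i). lia. Qed.

Lemma glued_agrees (X : Type) (rho : nat -> nat -> X) :
  (forall i, rho (S i) (c (S i)) = rho i (c (S i))) ->
  forall i k, c i <= k <= c (S i) -> rho (block_index k) k = rho i k.
Proof.
  intros Hjoin i k Hk. destruct (Nat.eq_dec k (c (S i))) as [->|Hne].
  - rewrite block_index_cut. apply Hjoin.
  - rewrite (block_index_unique i k) by lia. reflexivity.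
Qed.

End Cuts.

Definition block {Sg : Type} (y : word Sg) (c : nat -> nat) (i : nat) : list Sg :=
  factor y (c i) (c (S i) - c i).

Section BlockAcceptance.
Variables (Sg : Type) (N : nat) (A : buchi Sg).
Hypothesis HN : nst A <= N.

Definition template_of : template Sg N :=
  (fun s p q => f2n p < nst A /\ f2n q < nst A /\ btrans A (f2n p) s (f2n q),
   fun p => bfinal A (f2n p)).

Definition accepts_blockwise (y : word Sg) (c : nat -> nat) : Prop :=
  exists m : nat -> Fin.t N, binit A (f2n (m 0)) /\
    (forall i, reads template_of (block y c i) (m i) (m (S i))) /\
    (forall I, exists i, I <= i /\ reads_final template_of (block y c i) (m i) (m (S i))).

Lemma accepts_blockwise_of_accepts y c : is_cut_seq c -> accepts A y -> accepts_blockwise y c.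
Proof.
  intros Hc [r [[Hinit Hr] Hacc]].
  set (rf := fun k => Fin.of_nat_lt (Nat.lt_le_trans _ _ _ (proj1 (Hr k)) HN)).
  assert (Hrf : forall k, f2n (rf k) = r k) by (intros k; apply f2n_n2f).
  assert (Hpath : forall i j, is_path template_of y rf i j).
  { intros i j k _. simpl. rewrite !Hrf. split; [|split]; apply Hr. }
  assert (Hblock : forall i, c (S i) = c i + (c (S i) - c i))
    by (intros i; pose proof (proj2 Hc i); lia).
  exists (fun i => rf (c i)). split; [|split].
  - rewrite (proj1 Hc), Hrf. exact Hinit.
  - intros i. unfold block. rewrite (Hblock i) at 2. apply path_reads_factor, Hpath.
  - intros I. destruct (Hacc (c I)) as [k [Hk Hfin]].
    set (i := block_index c k). pose proof (block_index_spec c Hc k) as Hi. fold i in Hi.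
    exists i. split.
    + destruct (le_lt_dec I i) as [l|l]; [exact l|].
      pose proof (cut_lt c Hc (S i) I) as Hlt. destruct (Nat.eq_dec (S i) I); subst; lia.
    + unfold block. rewrite (Hblock i) at 2. apply path_reads_final_factor; [apply Hpath|].
      exists k. split; [lia|]. simpl. rewrite Hrf. exact Hfin.
Qed.

Lemma accepts_of_accepts_blockwise y c : is_cut_seq c -> accepts_blockwise y c -> accepts A y.
Proof.
  intros Hc [m [Hinit [Hm Hinf]]].
  assert (Hrho : forall i, exists rho : nat -> Fin.t N,
     rho (c i) = m i /\ rho (c (S i)) = m (S i) /\ is_path template_of y rho (c i) (c (S i)) /\
     (reads_final template_of (block y c i) (m i) (m (S i)) ->
        exists k, c i <= k <= c (S i) /\ snd template_of (rho k))).
  { intros i. assert (Hblock : c i + (c (S i) - c i) = c (S i)) by (pose proof (proj2 Hc i); lia).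
    destruct (classic (reads_final template_of (block y c i) (m i) (m (S i)))) as [HF|HF].
    - destruct (reads_final_factor_path _ _ _ _ _ _ _ _ HF) as [rho [H1 [H2 [H3 H4]]]].
      rewrite Hblock in *. exists rho. auto.
    - destruct (reads_factor_path _ _ _ _ _ _ _ _ (Hm i)) as [rho [H1 [H2 H3]]].
      rewrite Hblock in *. exists rho. split; [auto | split; [auto | split; [auto | tauto]]]. }
  destruct (choice _ Hrho) as [rho Hs].
  assert (Hjoin : forall i, rho (S i) (c (S i)) = rho i (c (S i))).
  { intros i. rewrite (proj1 (Hs (S i))). symmetry. apply Hs. }
  pose proof (glued_agrees c Hc _ rho Hjoin) as Hagree.
  exists (fun k => f2n (rho (block_index c k) k)). split; [split|].
  - pose proof (proj1 (Hs 0)) as E. rewrite (proj1 Hc) in E. simpl. rewrite E. exact Hinit.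
  - intros k. set (i := block_index c k).
    pose proof (block_index_spec c Hc k) as Hi. fold i in Hi |- *.
    rewrite (Hagree i (S k)) by lia.
    destruct (Hs i) as [_ [_ [Hpath _]]]. destruct (Hpath k ltac:(lia)) as [Hlt [_ Htrans]].
    split; assumption.
  - intros I. destruct (Hinf I) as [i [HI HF]].
    destruct (Hs i) as [_ [_ [_ Hfin]]]. destruct (Hfin HF) as [k [Hk Hfk]].
    exists k. split; [pose proof (cut_ge c Hc i); lia|].
    rewrite (Hagree i k Hk). exact Hfk.
Qed.

Lemma accepts_blockwise_transfer y z c c' :
  (forall i, profile_of (N := N) (block y c i) = profile_of (block z c' i)) ->
  accepts_blockwise y c -> accepts_blockwise z c'.
Proof.
  intros Hprof [m [Hinit [Hm Hinf]]]. exists m. split; [exact Hinit | split].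
  - intros i. apply (reads_profile_eq _ _ _ _ _ _ _ (Hprof i)), Hm.
  - intros I. destruct (Hinf I) as [i [Hi H]]. exists i.
    split; [exact Hi | apply (reads_final_profile_eq _ _ _ _ _ _ _ (Hprof i)), H].
Qed.

Lemma accepts_iff_of_block_profiles y z c c' : is_cut_seq c -> is_cut_seq c' ->
  (forall i, profile_of (N := N) (block y c i) = profile_of (block z c' i)) ->
  (accepts A y <-> accepts A z).
Proof.
  intros Hc Hc' Hprof. split; intros Hacc.
  - apply (accepts_of_accepts_blockwise z c' Hc'), (accepts_blockwise_transfer y z c c' Hprof).
    apply accepts_blockwise_of_accepts; assumption.
  - apply (accepts_of_accepts_blockwise y c Hc), (accepts_blockwise_transfer z y c' c).
    + intros i. symmetry. apply Hprof.
    + apply accepts_blockwise_of_accepts; assumption.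
Qed.

End BlockAcceptance.

(** * Omega-regular neighbourhoods *)

Definition nba_accepts {Sg X : Type} (init fin : X -> Prop) (step : X -> Sg -> X -> Prop)
  (y : word Sg) : Prop :=
  exists rho : nat -> X, init (rho 0) /\ (forall k, step (rho k) (y k) (rho (S k))) /\
    forall I, exists k, I <= k /\ fin (rho k).

Definition encoded_buchi {Sg X : Type} (K : nat) (enc : X -> nat) (init fin : X -> Prop)
  (step : X -> Sg -> X -> Prop) : buchi Sg :=
  {| nst := K;
     binit := fun p => exists x, enc x = p /\ init x;
     bfinal := fun p => exists x, enc x = p /\ fin x;
     btrans := fun p s q => exists x x', enc x = p /\ enc x' = q /\ step x s x' |}.

Lemma accepts_encoded_buchi {Sg X : Type} K (enc : X -> nat) init fin step (y : word Sg) :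
  (forall x, enc x < K) -> Injective enc ->
  (accepts (encoded_buchi K enc init fin step) y <-> nba_accepts init fin step y).
Proof.
  intros Hlt Hinj. split.
  - intros [r [[Hi Hr] Hacc]]. simpl in *.
    assert (Hdec : forall k, exists x, enc x = r k).
    { intros k. destruct (proj2 (Hr k)) as [x [x' [E _]]]. eauto. }
    destruct (choice _ Hdec) as [rho Hrho].
    assert (Hdecoded : forall x k, enc x = r k -> rho k = x).
    { intros x k E. apply Hinj. rewrite Hrho, E. reflexivity. }
    exists rho. split; [|split].
    + destruct Hi as [x [E H]]. rewrite (Hdecoded x 0 E). exact H.
    + intros k. destruct (proj2 (Hr k)) as [x [x' [E1 [E2 H]]]].
      rewrite (Hdecoded x k E1), (Hdecoded x' (S k) E2). exact H.
    + intros I. destruct (Hacc I) as [k [Hk [x [E H]]]].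
      exists k. split; [exact Hk|]. rewrite (Hdecoded x k E). exact H.
  - intros [rho [Hi [Hs Hf]]]. exists (fun k => enc (rho k)). split; [split|].
    + simpl. eauto.
    + intros k. simpl. split; [apply Hlt|]. exists (rho k), (rho (S k)). auto.
    + intros I. destruct (Hf I) as [k [Hk H]]. exists k. split; [exact Hk|]. simpl. eauto.
Qed.

Lemma nba_accepts_buchi {Sg X : Type} (init fin : X -> Prop) (step : X -> Sg -> X -> Prop) :
  Finite X -> exists A : buchi Sg, forall y, accepts A y <-> nba_accepts init fin step y.
Proof.
  intros HX. destruct (Finite_injection_nat X HX) as [K [enc [Hlt Hinj]]].
  exists (encoded_buchi K enc init fin step). intros y. apply accepts_encoded_buchi; assumption.
Qed.

Definition phase (i : nat) : bool := match i with 0 => false | S _ => true end.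

Section Lasso.
Variables (Sg : Type) (N : nat) (pu pv : profile Sg N).

Definition profile_lasso (y : word Sg) : Prop :=
  exists c, is_cut_seq c /\ profile_of (block y c 0) = pu /\
    forall i, profile_of (block y c (S i)) = pv.

(* A state [Some (v, pi, f)] has read the current block up to now with profile [pi]; [v] tells
   whether this block comes after the first one, and the flag [f] is raised exactly when
   a block has just been started, so that the Büchi condition asks for infinitely many cuts. *)
Definition lasso_state : Type := option (bool * profile Sg N * bool).

Definition lasso_step (x : lasso_state) (s : Sg) (x' : lasso_state) : Prop :=
  match x with
  | None => x' = Some (false, profile_of [s], false)
  | Some (v, pi, _) => x' = Some (v, profile_mul pi (profile_of [s]), false) \/
      ((if v then pi = pv else pi = pu) /\ x' = Some (true, profile_of [s], true))
  end.

Definition lasso_final (x : lasso_state) : Prop :=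
  match x with Some (_, _, f) => f = true | None => False end.

Definition lasso_accepts : word Sg -> Prop :=
  nba_accepts (fun x => x = None) lasso_final lasso_step.

Lemma Finite_lasso_state : Finite Sg -> Finite lasso_state.
Proof.
  intros HS. apply Finite_option.
  repeat apply Finite_prod; auto using Finite_bool, Finite_profile.
Qed.

Lemma profile_of_factor_snoc (y : word Sg) (i k : nat) : i <= k ->
  profile_of (N := N) (factor y i (S (S k) - i)) =
  profile_mul (profile_of (factor y i (S k - i))) (profile_of [y (S k)]).
Proof.
  intros H. replace (S (S k) - i) with (S (S k - i)) by lia.
  rewrite factor_snoc, profile_of_app. replace (i + (S k - i)) with (S k) by lia. reflexivity.
Qed.

Lemma lasso_complete (y : word Sg) : profile_lasso y -> lasso_accepts y.
Proof.
  intros [c [Hc [Hu Hv]]].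
  exists (fun k => match k with
           | 0 => None
           | S k => let i := block_index c k in
                    Some (phase i, profile_of (factor y (c i) (S k - c i)),
                          andb (phase i) (k =? c i))
           end).
  split; [reflexivity | split].
  - intros [|k]; cbn zeta.
    + change (block_index c 0) with 0. rewrite (proj1 Hc). reflexivity.
    + pose proof (block_index_spec c Hc k) as Hk. set (i := block_index c k) in *.
      destruct (Nat.eq_dec (S k) (c (S i))) as [E|E].
      * rewrite E, block_index_cut by exact Hc. right. split.
        -- destruct i; [exact Hu | exact (Hv i)].
        -- rewrite Nat.eqb_refl. replace (S (c (S i)) - c (S i)) with 1 by lia. reflexivity.
      * rewrite (block_index_unique c Hc i (S k)) by lia. left.
        rewrite profile_of_factor_snoc by lia.
        replace (S k =? c i) with false by (symmetry; apply Nat.eqb_neq; lia).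
        rewrite Bool.andb_false_r. reflexivity.
  - intros I. exists (S (c (S I))). split; [pose proof (cut_ge c Hc (S I)); lia|].
    cbn zeta. rewrite block_index_cut by exact Hc. apply Nat.eqb_refl.
Qed.

Section Soundness.
Variables (y : word Sg) (rho : nat -> lasso_state).
Hypotheses (Hinit : rho 0 = None) (Hstep : forall k, lasso_step (rho k) (y k) (rho (S k)))
  (Hinf : forall I, exists k, I <= k /\ lasso_final (rho k)).

Lemma lasso_second_state : rho 1 = Some (false, profile_of [y 0], false).
Proof. specialize (Hstep 0). rewrite Hinit in Hstep. exact Hstep. Qed.

Lemma lasso_run_cuts : exists c, is_cut_seq c /\
  forall k, lasso_final (rho (S k)) <-> exists i, c (S i) = k.
Proof.
  destruct (infinite_enumeration (fun k => lasso_final (rho k)) Hinf) as [f [Hf Hrange]].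
  assert (Hf0 : forall t, 2 <= f t).
  { intros t. pose proof (proj2 (Hrange (f t)) (ex_intro _ t eq_refl)) as Hfin.
    destruct (f t) as [|[|k]]; [| |lia].
    - rewrite Hinit in Hfin. destruct Hfin.
    - rewrite lasso_second_state in Hfin. discriminate. }
  exists (fun t => match t with 0 => 0 | S t => f t - 1 end). split; [split|].
  - reflexivity.
  - intros [|t]; [pose proof (Hf0 0); lia | pose proof (Hf0 t); pose proof (Hf t); lia].
  - intros k. rewrite (Hrange (S k)).
    split; intros [t Ht]; exists t; pose proof (Hf0 t); lia.
Qed.

Variable c : nat -> nat.
Hypotheses (Hc : is_cut_seq c)
  (Hcuts : forall k, lasso_final (rho (S k)) <-> exists i, c (S i) = k).

Lemma lasso_run_state k : let i := block_index c k in
  exists f, rho (S k) = Some (phase i, profile_of (factor y (c i) (S k - c i)), f).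
Proof.
  induction k as [|k [f IH]]; cbn zeta in *.
  - exists false. change (block_index c 0) with 0. rewrite lasso_second_state, (proj1 Hc).
    reflexivity.
  - pose proof (block_index_spec c Hc k) as Hk. set (i := block_index c k) in *.
    pose proof (Hstep (S k)) as Hs. rewrite IH in Hs. cbn [lasso_step] in Hs.
    destruct (classic (lasso_final (rho (S (S k))))) as [Hfin|Hfin].
    + destruct (proj1 (Hcuts (S k)) Hfin) as [j Hj].
      destruct Hs as [Hs | [_ Hs]]; rewrite Hs in Hfin |- *; [discriminate|].
      rewrite <- Hj, block_index_cut by exact Hc. rewrite Hj.
      exists true. replace (S (S k) - S k) with 1 by lia. reflexivity.
    + assert (Hin : S k < c (S i)).
      { destruct (Nat.eq_dec (S k) (c (S i))) as [E|E]; [|lia].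
        exfalso. apply Hfin, Hcuts. eauto. }
      rewrite (block_index_unique c Hc i (S k)) by lia.
      destruct Hs as [Hs | [_ Hs]]; rewrite Hs in Hfin |- *; [|exfalso; apply Hfin; reflexivity].
      exists false. rewrite profile_of_factor_snoc by lia. reflexivity.
Qed.

Lemma lasso_block_profile i : if phase i then profile_of (block y c i) = pv
                              else profile_of (block y c i) = pu.
Proof.
  pose proof (proj2 Hc i) as Hi. destruct (c (S i)) as [|k] eqn:Ek; [lia|].
  assert (Hk : block_index c k = i) by (apply block_index_unique; [exact Hc | lia]).
  destruct (lasso_run_state k) as [f Hs]. cbn zeta in Hs. rewrite Hk in Hs.
  pose proof (Hstep (S k)) as Hstep'. rewrite Hs in Hstep'. cbn [lasso_step] in Hstep'.
  assert (Hfin : lasso_final (rho (S (S k)))) by (apply Hcuts; eauto).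
  unfold block. rewrite Ek.
  destruct Hstep' as [Hnext | [Hprof _]]; [rewrite Hnext in Hfin; discriminate | exact Hprof].
Qed.

End Soundness.

Lemma lasso_sound (y : word Sg) : lasso_accepts y -> profile_lasso y.
Proof.
  intros [rho [Hinit [Hstep Hinf]]].
  destruct (lasso_run_cuts y rho Hinit Hstep Hinf) as [c [Hc Hcuts]].
  exists c. split; [exact Hc | split].
  - exact (lasso_block_profile y rho Hinit Hstep c Hc Hcuts 0).
  - intros i. exact (lasso_block_profile y rho Hinit Hstep c Hc Hcuts (S i)).
Qed.

End Lasso.

Lemma buchi_neighbourhood (Sg : Type) (N : nat) (x : word Sg) : Finite Sg ->
  exists C : buchi Sg, accepts C x /\
    forall y, accepts C y -> forall A : buchi Sg, nst A <= N -> (accepts A x <-> accepts A y).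
Proof.
  intros HS.
  destruct (ramsey_consecutive _ (fun i j => profile_of (N := N) (factor x i (j - i)))
              (Finite_profile Sg N HS)) as [h [Hh [pv Hpv]]].
  set (c := fun t => match t with 0 => 0 | S t => h (S t) end).
  assert (Hc : is_cut_seq c).
  { split; [reflexivity|]. intros [|t]; simpl; [pose proof (Hh 0) | pose proof (Hh (S t))]; lia. }
  set (pu := profile_of (N := N) (block x c 0)).
  destruct (nba_accepts_buchi (fun z => z = None) (lasso_final Sg N) (lasso_step Sg N pu pv)
              (Finite_lasso_state Sg N HS)) as [C HC].
  exists C. split.
  - apply HC, lasso_complete. exists c. split; [exact Hc | split; [reflexivity|]].
    intros i. apply (Hpv (S i)).
  - intros y Hy A HA. apply HC, lasso_sound in Hy. destruct Hy as [c' [Hc' [Hu Hv]]].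
    apply (accepts_iff_of_block_profiles Sg N A HA x y c c' Hc Hc').
    intros [|i]; [rewrite Hu | rewrite Hv; apply (Hpv (S i))]; reflexivity.
Qed.

Definition letter_at_buchi {Sg : Type} (j : nat) (s0 : Sg) : buchi Sg :=
  {| nst := j + 2; binit := fun p => p = 0; bfinal := fun p => p = S j;
     btrans := fun p s q =>
       (p < j /\ q = S p) \/ (p = j /\ s = s0 /\ q = S j) \/ (p = S j /\ q = S j) |}.

Lemma accepts_letter_at {Sg : Type} (j : nat) (s0 : Sg) (w : word Sg) :
  accepts (letter_at_buchi j s0) w <-> w j = s0.
Proof.
  split.
  - intros [r [[Hi Hr] _]]. simpl in *.
    assert (Hcount : forall t, t <= j -> r t = t).
    { induction t as [|t IH]; intros Ht; [exact Hi|].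
      pose proof (IH ltac:(lia)).
      destruct (proj2 (Hr t)) as [[_ E] | [[E _] | [E _]]]; lia. }
    pose proof (Hcount j (le_n j)).
    destruct (proj2 (Hr j)) as [[E _] | [[_ [E _]] | [E _]]]; [lia | exact E | lia].
  - intros Hw. exists (fun t => Nat.min t (S j)). split; [split|].
    + reflexivity.
    + intros t. simpl. split; [lia|].
      destruct (lt_eq_lt_dec t j) as [[Hlt | ->] | Hgt].
      * left. lia.
      * right. left. split; [lia | split; [exact Hw | lia]].
      * right. right. lia.
    + intros I. exists (S (I + j)). split; [lia|]. simpl. lia.
Qed.

Definition occurs_buchi {Sg : Type} (s0 : Sg) : buchi Sg :=
  {| nst := 2; binit := fun p => p = 0; bfinal := fun p => p = 1;
     btrans := fun p s q => (p = 0 /\ q = 0) \/ (p = 0 /\ s = s0 /\ q = 1) \/ (p = 1 /\ q = 1) |}.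

Lemma accepts_occurs {Sg : Type} (s0 : Sg) (w : word Sg) :
  accepts (occurs_buchi s0) w <-> exists k, w k = s0.
Proof.
  split.
  - intros [r [[Hi Hr] Hacc]]. simpl in *. destruct (Hacc 0) as [k [_ Hk]].
    clear Hacc. revert Hk. induction k as [|k IH]; intros Hk; simpl in Hk; [lia|].
    destruct (proj2 (Hr k)) as [[_ E] | [[_ [E _]] | [E _]]]; [lia | eauto | auto].
  - intros [k Hk]. exists (fun t => if t <=? k then 0 else 1). split; [split|].
    + reflexivity.
    + intros t. cbv beta.
      destruct (Nat.leb_spec t k), (Nat.leb_spec (S t) k); simpl; split; try lia.
      right. left. replace t with k by lia. auto.
    + intros I. exists (S (I + k)). split; [lia|].
      cbv beta. destruct (Nat.leb_spec (S (I + k)) k); [lia | reflexivity].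
Qed.

Open Scope R_scope.

Lemma inv_pow2_pos (n : nat) : 0 < / 2 ^ n.
Proof. apply Rinv_0_lt_compat, pow_lt. lra. Qed.

Lemma inv_pow2_lt (n m : nat) : (n < m)%nat -> / 2 ^ m < / 2 ^ n.
Proof.
  intros H. apply Rinv_lt_contravar.
  - apply Rmult_lt_0_compat; apply pow_lt; lra.
  - apply Rlt_pow; [lra | exact H].
Qed.

Lemma inv_pow2_le (n m : nat) : (n <= m)%nat -> / 2 ^ m <= / 2 ^ n.
Proof.
  intros H. apply Rinv_le_contravar; [apply pow_lt; lra|]. apply Rle_pow; [lra | exact H].
Qed.

Lemma inv_pow2_small (eps : R) : 0 < eps -> exists K : nat, / 2 ^ K < eps.
Proof.
  intros He. destruct (pow_lt_1_zero (/ 2)) with (y := eps) as [K HK].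
  - rewrite Rabs_pos_eq; lra.
  - exact He.
  - exists K. specialize (HK K (le_n K)). rewrite pow_inv, Rabs_pos_eq in HK; [exact HK|].
    left. apply inv_pow2_pos.
Qed.

Section Delta.
Variable Sg : Type.

Lemma separates_sym (A : buchi Sg) x y : separates A x y -> separates A y x.
Proof. unfold separates. tauto. Qed.

Lemma separates_split (A : buchi Sg) x y z :
  separates A x z -> separates A x y \/ separates A y z.
Proof. unfold separates. tauto. Qed.

Lemma separating_buchi_exists (x y : word Sg) : x <> y -> exists A : buchi Sg, separates A x y.
Proof.
  intros Hne. destruct (classic (exists j, x j <> y j)) as [[j Hj] | Hall].
  - exists (letter_at_buchi j (x j)). unfold separates. rewrite !accepts_letter_at. intuition.
  - exfalso. apply Hne, functional_extensionality. intros j.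
    apply NNPP. intros H. apply Hall. eauto.
Qed.

Lemma min_sep_exists (x y : word Sg) : x <> y -> exists n, is_min_sep x y n.
Proof.
  intros Hne. destruct (separating_buchi_exists x y Hne) as [A HA].
  destruct (least_element (fun n => exists A : buchi Sg, nst A = n /\ separates A x y) (nst A))
    as [n [Hn Hmin]]; [eauto|].
  exists n. split; [exact Hn|]. intros B HB. apply Hmin. eauto.
Qed.

Lemma delta_of_neq (x y : word Sg) : x <> y -> exists n, is_min_sep x y n /\ delta x y = / 2 ^ n.
Proof.
  intros Hne. unfold delta. destruct (excluded_middle_informative (x = y)); [contradiction|].
  eexists. split; [|reflexivity]. apply epsilon_spec, min_sep_exists, Hne.
Qed.

Lemma delta_diag (x : word Sg) : delta x x = 0.
Proof.
  unfold delta. destruct (excluded_middle_informative (x = x)); [reflexivity | congruence].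
Qed.

Lemma delta_ge0 (x y : word Sg) : 0 <= delta x y.
Proof.
  destruct (classic (x = y)) as [<- | Hne]; [rewrite delta_diag; lra|].
  destruct (delta_of_neq x y Hne) as [n [_ ->]]. left. apply inv_pow2_pos.
Qed.

Lemma delta_sym (x y : word Sg) : delta x y = delta y x.
Proof.
  assert (E : is_min_sep x y = is_min_sep y x).
  { apply functional_extensionality. intros n. apply propositional_extensionality.
    unfold is_min_sep. split; intros [[A [H1 H2]] H3];
      (split; [exists A; split; [exact H1 | apply separates_sym, H2]|]);
      intros B HB; apply H3, separates_sym, HB. }
  unfold delta. rewrite E.
  destruct (excluded_middle_informative (x = y)), (excluded_middle_informative (y = x)); congruence.
Qed.

Lemma delta_lt_inv_pow2 (x y : word Sg) (N : nat) :
  delta x y < / 2 ^ N <-> forall A : buchi Sg, (nst A <= N)%nat -> ~ separates A x y.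
Proof.
  destruct (classic (x = y)) as [<- | Hne].
  - rewrite delta_diag. split; [intros _ A _ Hs; apply Hs; tauto | intros _; apply inv_pow2_pos].
  - destruct (delta_of_neq x y Hne) as [n [[[A [HA Hs]] Hmin] ->]]. split.
    + intros H B HB HsB. pose proof (inv_pow2_le n N ltac:(specialize (Hmin B HsB); lia)). lra.
    + intros H. apply inv_pow2_lt. destruct (le_lt_dec n N) as [Hle | Hlt]; [|exact Hlt].
      exfalso. apply (H A); [lia | exact Hs].
Qed.

Lemma delta_ultrametric (x y z : word Sg) : delta x z <= Rmax (delta x y) (delta y z).
Proof.
  destruct (classic (x = z)) as [<- | Hxz].
  { rewrite delta_diag. apply Rle_trans with (delta x y); [apply delta_ge0 | apply Rmax_l]. }
  destruct (delta_of_neq x z Hxz) as [n [[[A [HA Hs]] _] ->]].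
  destruct (separates_split A x y z Hs) as [Hsep | Hsep];
    [apply Rle_trans with (delta x y); [|apply Rmax_l]
    |apply Rle_trans with (delta y z); [|apply Rmax_r]];
    apply Rnot_lt_le; rewrite delta_lt_inv_pow2; intros H; exact (H A (Nat.eq_le_incl _ _ HA) Hsep).
Qed.

Lemma delta_is_distance : is_distance (@delta Sg).
Proof.
  split; [exact delta_ge0 | split; [|split; [exact delta_sym|]]].
  - intros x y. split; [|intros <-; apply delta_diag].
    intros H. apply NNPP. intros Hne. destruct (delta_of_neq x y Hne) as [n [_ E]].
    pose proof (inv_pow2_pos n). lra.
  - intros x y z. pose proof (delta_ultrametric x y z). pose proof (delta_ge0 x y).
    pose proof (delta_ge0 y z). unfold Rmax in *. destruct (Rle_dec (delta x y) (delta y z)); lra.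
Qed.

End Delta.

(** * Compatibility with the Büchi topology *)

Section Topology.
Variable Sg : Type.
Hypothesis HS : Finite Sg.

Lemma metric_open_buchi_open (U : word Sg -> Prop) : metric_open (@delta Sg) U -> buchi_open U.
Proof.
  intros Hopen x Ux. destruct (Hopen x Ux) as [eps [He Hball]].
  destruct (inv_pow2_small eps He) as [K HK].
  destruct (buchi_neighbourhood Sg K x HS) as [C [Cx HC]].
  exists [accepts C]. split.
  - intros L [<- | []]. split; [exists C; tauto | exact Cx].
  - intros y Hy. apply Hball. apply Rlt_trans with (/ 2 ^ K); [|exact HK].
    apply delta_lt_inv_pow2. intros A HA Hs. apply Hs, (HC y (Hy _ (or_introl eq_refl)) A HA).
Qed.

Lemma omega_regular_bounded (Ls : list (word Sg -> Prop)) :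
  (forall L, In L Ls -> omega_regular L) ->
  exists K, forall L, In L Ls ->
    exists A : buchi Sg, (nst A <= K)%nat /\ forall w, L w <-> accepts A w.
Proof.
  induction Ls as [|L0 Ls IH]; intros Hreg.
  - exists 0%nat. intros L [].
  - destruct IH as [K HK]; [intros L HL; apply Hreg; right; exact HL|].
    destruct (Hreg L0 (or_introl eq_refl)) as [A0 HA0].
    exists (Nat.max K (nst A0)). intros L [<- | HL].
    + exists A0. split; [lia | exact HA0].
    + destruct (HK L HL) as [A [HA HAL]]. exists A. split; [lia | exact HAL].
Qed.

Lemma buchi_open_metric_open (U : word Sg -> Prop) : buchi_open U -> metric_open (@delta Sg) U.
Proof.
  intros Hopen x Ux. destruct (Hopen x Ux) as [Ls [HL HU]].
  destruct (omega_regular_bounded Ls (fun L HL' => proj1 (HL L HL'))) as [K HK].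
  exists (/ 2 ^ K). split; [apply inv_pow2_pos|].
  intros y Hd. apply HU. intros L HLin. destruct (HK L HLin) as [A [HA HAL]].
  apply HAL. apply NNPP. intros Hy. apply (proj1 (delta_lt_inv_pow2 Sg x y K) Hd A HA).
  pose proof (proj1 (HAL x) (proj2 (HL L HLin))). unfold separates. tauto.
Qed.

End Topology.

(** * Non-completeness *)

Open Scope nat_scope.

Lemma fact_ge (n : nat) : n <= fact n.
Proof. induction n as [|n IH]; [simpl; lia|]. simpl. pose proof (lt_O_fact n). nia. Qed.

Lemma divide_fact (d n : nat) : 1 <= d <= n -> Nat.divide d (fact n).
Proof.
  induction n as [|n IH]; intros H; [lia|].
  destruct (Nat.eq_dec d (S n)) as [->|Hne].
  - exists (fact n). simpl. lia.
  - apply Nat.divide_mul_r, IH. lia.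
Qed.

Section NotComplete.
Variables (Sg : Type) (a b : Sg).

Definition fact_seq (n : nat) : word Sg := fun k => if k =? fact n then b else a.

Lemma factor_fact_seq_prefix n i len : i + len <= fact n ->
  factor (fact_seq n) i len = repeat a len.
Proof.
  revert i. induction len as [|len IH]; intros i H; [reflexivity|].
  simpl. f_equal; [|apply IH; lia]. unfold fact_seq.
  destruct (Nat.eqb_spec i (fact n)); [lia | reflexivity].
Qed.

Lemma fact_seq_suffix n j : fact_seq n (fact n + j) = match j with 0 => b | S _ => a end.
Proof.
  unfold fact_seq. destruct j as [|j].
  - rewrite Nat.add_0_r, Nat.eqb_refl. reflexivity.
  - destruct (Nat.eqb_spec (fact n + S j) (fact n)); [lia | reflexivity].
Qed.

Lemma accepts_fact_seq_iff (N : nat) (A : buchi Sg) n m : nst A <= N ->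
  profile_of (N := N) (repeat a (fact n)) = profile_of (repeat a (fact m)) ->
  (accepts A (fact_seq n) <-> accepts A (fact_seq m)).
Proof.
  intros HA Hprof.
  set (cut := fun p t => match t with 0 => 0 | S j => fact p + j end).
  assert (Hcut : forall p, is_cut_seq (cut p)).
  { intros p. split; [reflexivity|]. intros [|t]; simpl; [pose proof (lt_O_fact p)|]; lia. }
  apply (accepts_iff_of_block_profiles Sg N A HA _ _ (cut n) (cut m) (Hcut n) (Hcut m)).
  intros [|i]; unfold block; simpl.
  - rewrite !Nat.sub_0_r, !Nat.add_0_r, !factor_fact_seq_prefix by lia. exact Hprof.
  - replace (fact n + S i - (fact n + i)) with 1 by lia.
    replace (fact m + S i - (fact m + i)) with 1 by lia.
    simpl. rewrite !fact_seq_suffix. reflexivity.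
Qed.

Lemma profile_repeat_fact_stable (N t1 d : nat) : 1 <= d ->
  profile_of (N := N) (repeat a (t1 + d)) = profile_of (repeat a t1) ->
  forall n m, t1 + d <= n <= m ->
    profile_of (N := N) (repeat a (fact m)) = profile_of (repeat a (fact n)).
Proof.
  intros Hd Hper n m Hnm.
  assert (Hshift : forall k r,
            profile_of (N := N) (repeat a (t1 + r + k * d)) = profile_of (repeat a (t1 + r))).
  { induction k as [|k IH]; intros r; [rewrite Nat.add_0_r; reflexivity|].
    replace (t1 + r + S k * d) with ((t1 + d) + (r + k * d)) by lia.
    rewrite repeat_app, profile_of_app, Hper, <- profile_of_app, <- repeat_app, <- (IH r).
    f_equal. f_equal. lia. }
  destruct (divide_fact d n ltac:(lia)) as [q Hq], (divide_fact d m ltac:(lia)) as [p Hp].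
  pose proof (fact_le n m ltac:(lia)). pose proof (fact_ge n).
  replace (fact m) with (t1 + (fact n - t1) + (p - q) * d) by (rewrite Nat.mul_sub_distr_r; lia).
  rewrite Hshift. f_equal. f_equal. lia.
Qed.

Lemma fact_seq_cauchy : Finite Sg -> cauchy (@delta Sg) fact_seq.
Proof.
  intros HS eps He. destruct (inv_pow2_small eps He) as [K HK].
  destruct (infinite_pigeonhole _ _ (fun t => profile_of (N := K) (repeat a t))
              (Finite_profile Sg K HS) infinite_all) as [pr Hpr].
  destruct (Hpr 0) as [t1 [_ [_ E1]]]. destruct (Hpr (S t1)) as [t2 [Ht2 [_ E2]]].
  exists t2. intros m n Hm Hn. apply Rlt_trans with (/ 2 ^ K)%R; [|exact HK].
  apply delta_lt_inv_pow2. intros A HA Hs. apply Hs, (accepts_fact_seq_iff K A m n HA).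
  assert (Hstable := profile_repeat_fact_stable K t1 (t2 - t1) ltac:(lia)
                       ltac:(replace (t1 + (t2 - t1)) with t2 by lia; congruence)).
  destruct (le_ge_dec m n); [symmetry|]; apply Hstable; lia.
Qed.

Lemma fact_seq_not_convergent : a <> b -> ~ converges (@delta Sg) fact_seq.
Proof.
  intros Hab [l Hl]. destruct (classic (exists j, l j <> a)) as [[j Hj] | Hall].
  - destruct (Hl (/ 2 ^ (j + 2))%R (inv_pow2_pos _)) as [N0 HN0].
    set (n := Nat.max N0 (S j)).
    apply (proj1 (delta_lt_inv_pow2 Sg _ _ _) (HN0 n ltac:(lia)) (letter_at_buchi j (l j))
             (le_n _)).
    unfold separates. rewrite !accepts_letter_at. unfold fact_seq.
    destruct (Nat.eqb_spec j (fact n)) as [E|_]; [pose proof (fact_ge n); lia|]. intuition.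
  - destruct (Hl (/ 2 ^ 2)%R (inv_pow2_pos _)) as [N0 HN0].
    apply (proj1 (delta_lt_inv_pow2 Sg _ _ _) (HN0 N0 (le_n _)) (occurs_buchi b) (le_n _)).
    unfold separates. rewrite !accepts_occurs. intros Hiff.
    destruct (proj1 Hiff) as [k Hk].
    + exists (fact N0). rewrite <- (Nat.add_0_r (fact N0)). apply fact_seq_suffix.
    + apply Hall. exists k. congruence.
Qed.

End NotComplete.

Open Scope R_scope.

Theorem proposition3p2 (Sigma : Type)
  (Hfin : exists l : list Sigma, forall a : Sigma, In a l)
  (a b : Sigma) (Hab : a <> b) :
  is_distance (@delta Sigma) /\
  (forall U : word Sigma -> Prop, metric_open (@delta Sigma) U <-> buchi_open U) /\
  ~ complete (@delta Sigma).
Proof.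
  split; [apply delta_is_distance | split].
  - intros U. split; [apply metric_open_buchi_open | apply buchi_open_metric_open]; exact Hfin.
  - intros Hcomplete. apply (fact_seq_not_convergent Sigma a b Hab), Hcomplete.
    apply fact_seq_cauchy, Hfin.
Qed.
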